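(* Let $D$ be a strong nonseparable digraph, let $H$ be a strong nonseparable subdigraph of $D$, and let $P=(x_0,x_1,\ldots,x_{r-1},x_r)$ be an ear of $H$ in $D$ with length $l(P)=r\geq 2$. If $H$ has a kernel $N$ and $H'=H\cup P$ has no kernel, then one of the following holds: (1) $x_0,x_r\in N$ and $l(P)$ is odd; (2) $x_0\in N$, $x_r\notin N$ and $l(P)$ is even.
   Context: All digraphs are finite, without loops or multiple arcs. Paths and cycles are directed; the length of a path is its number of arcs. A digraph is strong if for every ordered pair of vertices $x,y$ there is a directed path from $x$ to $y$; it is nonseparable if its underlying undirected graph is nonseparable (has no cut vertex). For a subdigraph $H$ of $D$, an ear of $H$ in $D$ is a directed path $(x_0,\ldots,x_r)$ in $D$ whose end vertices $x_0,x_r$ lie in $H$ and whose internal vertices $x_1,\ldots,x_{r-1}$ do not lie in $H$ (or a directed cycle with exactly one vertex $x_0=x_r$ in $H$). A kernel of a digraph is a set $N$ of vertices that is independent (no arc between two of its vertices) and absorbent (every vertex not in $N$ has an out-neighbour in $N$). *)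

From mathcomp Require Import all_boot.

Set Implicit Arguments. Unset Strict Implicit. Unset Printing Implicit Defensive.

(* A digraph with vertex set contained in a finType T is given by a vertex
   set V : {set T} and an arc relation A : rel T (arcs only among V are used). *)

Definition arcs_in (T : finType) (V : {set T}) (A : rel T) : rel T :=
  fun x y => [&& x \in V, y \in V & A x y].

Definition strong (T : finType) (V : {set T}) (A : rel T) : Prop :=
  forall x y, x \in V -> y \in V -> connect (arcs_in V A) x y.

Definition uconnected (T : finType) (V : {set T}) (A : rel T) : Prop :=
  forall x y, x \in V -> y \in V ->
    connect (arcs_in V (fun u v => A u v || A v u)) x y.

Definition nonseparable (T : finType) (V : {set T}) (A : rel T) : Prop :=
  uconnected V A /\ forall v, v \in V -> uconnected (V :\ v) A.

Definition subdigraph (T : finType) (E : rel T) (VH : {set T}) (AH : rel T) : Prop :=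
  forall x y, AH x y -> [&& x \in VH, y \in VH & E x y].

(* The walk x0 :: s = (x_0, x_1, ..., x_r), r = size s, is an ear of (VH,AH) in (setT,E):
   a directed path (or a cycle with x_0 = x_r), endpoints in VH, internal vertices
   outside VH. *)
Definition ear (T : finType) (E : rel T) (VH : {set T}) (x0 : T) (s : seq T) : Prop :=
  [/\ 0 < size s, path E x0 s,
      x0 \in VH /\ last x0 s \in VH,
      all (fun v => v \notin VH) (behead (belast x0 s)) &
      uniq (belast x0 s) /\ uniq s].

Definition union_verts (T : finType) (VH : {set T}) (x0 : T) (s : seq T) : {set T} :=
  VH :|: [set v | v \in x0 :: s].

Definition union_arcs (T : finType) (AH : rel T) (x0 : T) (s : seq T) : rel T :=
  fun x y => AH x y || ((x, y) \in zip (x0 :: s) s).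

Definition kernel (T : finType) (V : {set T}) (A : rel T) (N : {set T}) : Prop :=
  [/\ N \subset V,
      (forall x y, x \in N -> y \in N -> ~~ A x y) &
      (forall v, v \in V -> v \notin N -> exists2 y, y \in N & A v y)].

Definition has_kernel (T : finType) (V : {set T}) (A : rel T) : Prop :=
  exists N, kernel V A N.

From mathcomp Require Import all_boot zify.

(* Extend the kernel N of H along the ear P = (x_0, ..., x_r) by alternation
   from the end: an internal vertex x_j joins the kernel iff the parity of
   r - j differs from [x_r \in N].  Membership then alternates along all of
   P (x_r included), so every internal vertex outside the kernel is absorbed
   by its successor, and the only arc of P that can join two kernel vertices
   is x_0 x_1; it does exactly when x_0 \in N and (r odd) = (x_r \in N). *)

Set Implicit Arguments.
Unset Strict Implicit.
Unset Printing Implicit Defensive.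

Lemma nth_belast (T : Type) (y x : T) (s : seq T) j :
  j < size s -> nth y (belast x s) j = nth y (x :: s) j.
Proof. by move=> js; rewrite [in RHS]lastI nth_rcons size_belast js. Qed.

Lemma mem_zipP (S U : eqType) (x0 : S) (y0 : U) (s : seq S) (t : seq U) x y :
  reflect (exists2 j, j < minn (size s) (size t) &
                      (x, y) = (nth x0 s j, nth y0 t j))
          ((x, y) \in zip s t).
Proof.
rewrite -size_zip; apply: (iffP (nthP (x0, y0))) => -[j jlt exy]; exists j => //.
  by rewrite -exy nth_zip_cond jlt.
by rewrite exy nth_zip_cond jlt.
Qed.

Section EarKernel.

Variables (T : finType) (VH : {set T}) (AH : rel T) (N : {set T}).
Variables (x0 : T) (s : seq T).

Hypothesis arcs_VH : forall x y, AH x y -> (x \in VH) && (y \in VH).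
Hypothesis kerN : kernel VH AH N.
Hypothesis x0_VH : x0 \in VH.
Hypothesis last_VH : last x0 s \in VH.
Hypothesis ear_internal : all (fun v => v \notin VH) (behead (belast x0 s)).
Hypothesis uniq_belast : uniq (belast x0 s).

Local Notation r := (size s).
Local Notation x j := (nth x0 (x0 :: s) j).
Local Notation q := (belast x0 s).

Let parity j := odd (r - j) != (last x0 s \in N).

(* The internal vertex v = x_j is recovered as j = index v q. *)
Let K := N :|: [set v | [&& v \in q, v \notin VH & parity (index v q)]].

Let N_VH : {subset N <= VH}.
Proof. by have [/subsetP] := kerN. Qed.

Lemma ear_internal_notin_VH j : 0 < j < r -> x j \notin VH.
Proof.
case/andP=> j0 jr; have -> : x j = nth x0 (behead q) j.-1.
  by rewrite nth_behead prednK // nth_belast.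
apply/(allP ear_internal)/mem_nth.
by rewrite size_behead size_belast -ltnS prednK // (ltn_predK jr).
Qed.

Lemma ear_internal_vertex v :
  v \in x0 :: s -> v \notin VH -> exists2 j, 0 < j < r & v = x j.
Proof.
case/(nthP x0) => j; rewrite ltnS => jr <- xjH; exists j => //.
rewrite lt0n ltn_neqAle jr andbT.
by apply/andP; split; apply: contraNneq xjH => ->; rewrite -?last_nth.
Qed.

Let paritySn j : j < r -> parity j.+1 = ~~ parity j.
Proof. by move=> jr; rewrite /parity -(subnSK jr) oddS; case: odd; case: (_ \in N). Qed.

Let in_K_VH v : v \in VH -> (v \in K) = (v \in N).
Proof. by move=> vH; rewrite !inE vH andbF orbF. Qed.

Let in_K_ear j : 0 < j <= r -> (x j \in K) = parity j.
Proof.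
case/andP=> j0; rewrite leq_eqVlt => /orP[/eqP-> | jr].
  by rewrite -last_nth in_K_VH // /parity subnn; case: (_ \in N).
have xjH : x j \notin VH by apply: ear_internal_notin_VH; rewrite j0.
have xjN : x j \notin N := contra (@N_VH _) xjH.
by rewrite !inE (negbTE xjN) xjH -nth_belast // mem_nth ?index_uniq ?size_belast.
Qed.

Hypothesis x0_parity : x0 \in N -> odd r != (last x0 s \in N).

Let in_K_parity j : j <= r -> x j \in K -> parity j.
Proof.
case: j => [_ | j jr]; last by rewrite in_K_ear.
by rewrite in_K_VH // /parity subn0; apply: x0_parity.
Qed.

Lemma ear_kernel_subset : K \subset union_verts VH x0 s.
Proof.
apply/subsetP=> v; rewrite !inE => /orP[/N_VH -> // | /and3P[/mem_belast vp _ _]].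
by rewrite -in_cons vp orbT.
Qed.

Lemma ear_kernel_independent u v :
  u \in K -> v \in K -> ~~ union_arcs AH x0 s u v.
Proof.
have [_ Nind _] := kerN; move=> uK vK; apply/norP; split.
  apply/negP=> uv; have /andP[uH vH] := arcs_VH uv.
  by move: (Nind u v); rewrite -!in_K_VH // uv => /(_ uK vK).
apply/negP=> /(mem_zipP x0 x0) [j /= jr [eu ev]]; subst u v.
have {}jr : j < r by lia.
have := in_K_parity (ltnW jr) uK; have := in_K_parity jr vK.
by rewrite paritySn // => /negP.
Qed.

Lemma ear_kernel_absorbent v :
  v \in union_verts VH x0 s -> v \notin K ->
  exists2 y, y \in K & union_arcs AH x0 s v y.
Proof.
have [_ _ Nabs] := kerN; move=> vV vK; case: (boolP (v \in VH)) => vH.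
  have [y yN vy] : exists2 y, y \in N & AH v y by apply: Nabs; rewrite -?in_K_VH.
  by exists y; [rewrite inE yN | rewrite /union_arcs vy].
move: vV; rewrite !inE (negbTE vH) -in_cons => /ear_internal_vertex/(_ vH).
case=> j /andP[j0 jr] ev; subst v; exists (x j.+1).
  have npj : ~~ parity j by rewrite -in_K_ear // j0 ltnW.
  by rewrite in_K_ear ?paritySn.
by apply/orP; right; apply/(mem_zipP x0 x0); exists j => //=; lia.
Qed.

Lemma ear_has_kernel : has_kernel (union_verts VH x0 s) (union_arcs AH x0 s).
Proof.
exists K; split; [exact: ear_kernel_subset | exact: ear_kernel_independent |].
exact: ear_kernel_absorbent.
Qed.

End EarKernel.

Theorem mainTheorem10 (T : finType) (E : rel T) (VH : {set T}) (AH : rel T)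
    (x0 : T) (s : seq T) (N : {set T}) :
  irreflexive E ->
  strong [set: T] E -> nonseparable [set: T] E ->
  subdigraph E VH AH -> strong VH AH -> nonseparable VH AH ->
  ear E VH x0 s -> 2 <= size s ->
  kernel VH AH N ->
  ~ has_kernel (union_verts VH x0 s) (union_arcs AH x0 s) ->
  (x0 \in N /\ last x0 s \in N /\ odd (size s)) \/
  (x0 \in N /\ last x0 s \notin N /\ ~~ odd (size s)).
Proof.
move=> _ _ _ subH _ _ [_ _ [x0H lastH] internal [uniq_q _]] _ kerN no_kernel.
have arcs_VH x y : AH x y -> (x \in VH) && (y \in VH).
  by case/subH/and3P => -> ->.
have extends := ear_has_kernel arcs_VH kerN x0H lastH internal uniq_q.
case x0N: (x0 \in N); last by case: no_kernel; apply: extends; rewrite x0N.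
have : ~~ (odd (size s) != (last x0 s \in N)).
  by apply/negP => ne; apply: no_kernel; apply: extends.
by case: (_ \in N); case: odd => //= _; [left | right].
Qed.
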